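(* Let $\lambda$ be a nonzero real number. For all integers $m,n\ge 0$, $$\binom{n+m}{n}H_{n+m,\lambda}=\sum_{l=0}^{n}H_{l,\lambda}\binom{m+n-l-1}{n-l}+H_{m,\lambda}\binom{m+n-\lambda}{n},$$ where $H_{j,\lambda}$ denotes the $j$-th degenerate harmonic number.
   Context: For nonzero real $\lambda$, the degenerate harmonic numbers are defined by $H_{0,\lambda}=0$ and, for $j\ge 1$, $$H_{j,\lambda}=\frac{1}{\lambda}\sum_{k=1}^{j}\binom{\lambda}{k}(-1)^{k-1}=\sum_{k=1}^{j}\binom{\lambda-1}{k-1}\frac{(-1)^{k-1}}{k}.$$ Equivalently, $\frac{1}{1-t}\log_{-\lambda}\!\left(\frac{1}{1-t}\right)=\sum_{j\ge1}H_{j,\lambda}t^j$, where $\log_{\mu}(t)=\frac{1}{\mu}(t^{\mu}-1)$. Binomial coefficients are the generalized ones: for any real $a$ and integer $j\ge 0$, $\binom{a}{j}=\frac{a(a-1)\cdots(a-j+1)}{j!}$, with $\binom{a}{0}=1$; in particular $\binom{-1}{0}=1$. *)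

From mathcomp Require Import all_boot all_order all_algebra.
Set Implicit Arguments. Unset Strict Implicit. Unset Printing Implicit Defensive.
Import Order.TTheory GRing.Theory Num.Theory.
Local Open Scope ring_scope.

Definition gbinom {R : realFieldType} (a : R) (j : nat) : R :=
  (\prod_(i < j) (a - i%:R)) / (j`!)%:R.

Definition degH {R : realFieldType} (lam : R) (j : nat) : R :=
  lam^-1 * \sum_(1 <= k < j.+1) gbinom lam k * (-1) ^+ k.-1.

(* Multiplying by [lam] linearises the degenerate harmonic numbers: Pascal's
   rule telescopes their defining sum into [lam * H_j = 1 - binom(j - lam, j)].
   After this substitution the two convolutions in the theorem are instances of
   the Chu-Vandermonde identity for the coefficients [binom(a + l, l)] of
   [(1 - t)^(-a-1)], and what remains is the trinomial revision
   [binom(n + m, n) binom(x, n + m) = binom(x, n) binom(x - n, m)].  Every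
   binomial identity is proved by checking that both sides satisfy the same
   first-order recurrence in the lower index. *)

From mathcomp Require Import all_boot all_order all_algebra.
From mathcomp Require Import ring.
Import Order.TTheory GRing.Theory Num.Theory.
Local Open Scope ring_scope.

Section GeneralizedBinomials.
Variable R : realFieldType.
Implicit Types (a b x y : R) (f g r : nat -> R).

Lemma natrS_neq0 k : (k.+1%:R : R) != 0.
Proof. by rewrite pnatr_eq0. Qed.

Lemma eq_by_ratio f g r : f 0%N = g 0%N ->
  (forall j, j.+1%:R * f j.+1 = r j * f j) ->
  (forall j, j.+1%:R * g j.+1 = r j * g j) -> f =1 g.
Proof.
move=> eq0 recf recg; elim=> // j IHj.
by apply: (mulfI (natrS_neq0 j)); rewrite recf recg IHj.
Qed.

Lemma natr_fact_neq0 k : (k`!%:R : R) != 0.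
Proof. by rewrite pnatr_eq0 -lt0n fact_gt0. Qed.

Lemma gbinom0 x : gbinom x 0 = 1.
Proof. by rewrite /gbinom big_ord0 fact0 divr1. Qed.

Lemma mul_gbinom_left x k : k.+1%:R * gbinom x k.+1 = (x - k%:R) * gbinom x k.
Proof.
rewrite /gbinom big_ord_recr /= factS natrM; field.
by rewrite natr_fact_neq0 addrC natr1 natrS_neq0.
Qed.

Lemma mul_gbinom_diag y k : k.+1%:R * gbinom (y + 1) k.+1 = (y + 1) * gbinom y k.
Proof.
rewrite /gbinom big_ord_recl /= factS natrM subr0.
under eq_bigr => i _ do rewrite /bump /= add1n -natr1 opprD addrACA subrr addr0.
by field; rewrite natr_fact_neq0 addrC natr1 natrS_neq0.
Qed.

Lemma mul_gbinom_down y k :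
  (y + 1 - k%:R) * gbinom (y + 1) k = (y + 1) * gbinom y k.
Proof. by rewrite -mul_gbinom_left mul_gbinom_diag. Qed.

Lemma gbinomS y k : gbinom (y + 1) k.+1 = gbinom y k.+1 + gbinom y k.
Proof.
apply: (mulfI (natrS_neq0 k)).
by rewrite mul_gbinom_diag mulrDr mul_gbinom_left -natr1; ring.
Qed.

Definition rising_binom a l := gbinom (a + l%:R) l.

Lemma rising_binom0 a : rising_binom a 0 = 1.
Proof. exact: gbinom0. Qed.

Lemma mul_rising_binomS a l :
  l.+1%:R * rising_binom a l.+1 = (a + l%:R + 1) * rising_binom a l.
Proof. by rewrite /rising_binom -[in a + _]natr1 addrA mul_gbinom_diag. Qed.

Lemma rising_binom0n l : rising_binom 0 l = 1.
Proof.
apply: (@eq_by_ratio _ (fun=> 1) (fun j => j.+1%:R)) => [|j|j].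
- exact: rising_binom0.
- by rewrite mul_rising_binomS add0r natr1.
- by [].
Qed.

Lemma gbinom_nn n : gbinom (n%:R : R) n = 1.
Proof. by have := rising_binom0n n; rewrite /rising_binom add0r. Qed.

Lemma signed_gbinomE x k : (-1) ^+ k * gbinom x k = rising_binom (- x - 1) k.
Proof.
apply: (@eq_by_ratio (fun k => (-1) ^+ k * gbinom x k) _ (fun j => j%:R - x)).
- by rewrite gbinom0 rising_binom0 mulr1.
- by move=> j; rewrite exprS mulrCA mul_gbinom_left; ring.
- by move=> j; rewrite mul_rising_binomS; ring.
Qed.

Lemma rising_binom_conv_rec a b j :
  j.+1%:R * \sum_(l < j.+2) rising_binom a l * rising_binom b (j.+1 - l) =
  (a + b + j%:R + 2) * \sum_(l < j.+1) rising_binom a l * rising_binom b (j - l).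
Proof.
have split_weight (l : 'I_j.+2) : j.+1%:R = l%:R + (j.+1 - l)%:R :> R.
  by rewrite -natrD subnKC // -ltnS.
rewrite mulr_sumr.
under eq_bigr => l _ do rewrite (split_weight l) mulrDl.
rewrite big_split /= big_ord_recl /= mul0r add0r.
rewrite [X in _ + X]big_ord_recr /= subnn mul0r addr0.
rewrite mulr_sumr -big_split; apply: eq_bigr => l _ /=.
have le_lj : (l <= j)%N by rewrite -ltnS.
rewrite /bump /= add1n subSS subSn // mulrA mul_rising_binomS.
by rewrite [(j - l).+1%:R * _]mulrCA mul_rising_binomS natrB //; ring.
Qed.

Lemma rising_binom_vandermonde a b n :
  \sum_(l < n.+1) rising_binom a l * rising_binom b (n - l) =
  rising_binom (a + b + 1) n.
Proof.
apply: (@eq_by_ratio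
  (fun n => \sum_(l < n.+1) rising_binom a l * rising_binom b (n - l))
  _ (fun j => a + b + j%:R + 2)) => [|j|j].
- by rewrite big_ord1 !rising_binom0 mulr1.
- exact: rising_binom_conv_rec.
- by rewrite mul_rising_binomS; ring.
Qed.

Lemma gbinom_trinomial x n m :
  gbinom ((n + m)%:R) n * gbinom x (n + m) = gbinom x n * gbinom (x - n%:R) m.
Proof.
apply: (@eq_by_ratio (fun m => gbinom ((n + m)%:R) n * gbinom x (n + m))
  (fun m => gbinom x n * gbinom (x - n%:R) m) (fun j => x - n%:R - j%:R)).
- by rewrite addn0 gbinom_nn gbinom0 mul1r mulr1.
- move=> j; rewrite addnS.
  have down : j.+1%:R * gbinom (n + j).+1%:R n =
              (n + j).+1%:R * gbinom (n + j)%:R n :> R.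
    have := mul_gbinom_down ((n + j)%:R : R) n; rewrite natr1 => <-.
    by congr (_ * _); rewrite -addnS natrD; ring.
  apply: (mulfI (natrS_neq0 (n + j))).
  transitivity ((j.+1%:R * gbinom (n + j).+1%:R n) *
                ((n + j).+1%:R * gbinom x (n + j).+1)); first ring.
  by rewrite down mul_gbinom_left natrD; ring.
- by move=> j; rewrite mulrCA mul_gbinom_left; ring.
Qed.

End GeneralizedBinomials.

Arguments rising_binom {R} a l.

Lemma mul_degH (R : realFieldType) (lam : R) j :
  lam != 0 -> lam * degH lam j = 1 - rising_binom (- lam) j.
Proof.
move=> lam_neq0; elim: j => [|j IHj].
  by rewrite /degH big_geq // !mulr0 rising_binom0 subrr.
have sign : gbinom lam j.+1 * (-1) ^+ j = - rising_binom (- lam - 1) j.+1.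
  by rewrite -signed_gbinomE exprS; ring.
have pascal : rising_binom (- lam) j.+1 =
              rising_binom (- lam - 1) j.+1 + rising_binom (- lam) j.
  rewrite /rising_binom (_ : - lam - 1 + _ = - lam + j%:R) -?gbinomS.
    by congr (gbinom _ _); rewrite -natr1; ring.
  by rewrite -natr1; ring.
rewrite /degH big_nat_recr //= mulrDr -/(degH lam j) mulrDr IHj.
by rewrite !mulrA mulfV // mul1r sign pascal; ring.
Qed.

Theorem theorem2p3 (R : realFieldType) (lam : R) (hlam : lam != 0) (m n : nat) :
  gbinom ((n + m)%:R : R) n * degH lam (n + m) =
  \sum_(0 <= l < n.+1)
      degH lam l * gbinom ((m + n)%:R - l%:R - 1 : R) (n - l)
  + degH lam m * gbinom ((m + n)%:R - lam) n.
Proof.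
have summand l : (l <= n)%N ->
    lam * (degH lam l * gbinom ((m + n)%:R - l%:R - 1) (n - l)) =
    rising_binom 0 l * rising_binom (m%:R - 1) (n - l) -
    rising_binom (- lam) l * rising_binom (m%:R - 1) (n - l).
  move=> le_ln; have -> : (m + n)%:R - l%:R - 1 = m%:R - 1 + (n - l)%:R :> R.
    by rewrite natrB // natrD; ring.
  by rewrite mulrA mul_degH // rising_binom0n mulrBl mul1r.
apply: (mulfI hlam).
rewrite mulrCA mul_degH // [RHS]mulrDr [lam * (_ * _)]mulrA mul_degH //.
rewrite mulr_sumr big_mkord (eq_bigr _ (fun (l : 'I_n.+1) _ => summand l (ltn_ord l))).
rewrite sumrB !rising_binom_vandermonde /rising_binom.
rewrite mulrBr mulr1 gbinom_trinomial.
have shift (a : R) : a + (m%:R - 1) + 1 + n%:R = a + (n + m)%:R.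
  by rewrite natrD; ring.
have -> : (m + n)%:R - lam = - lam + (n + m)%:R by rewrite addnC addrC.
have -> : - lam + (n + m)%:R - n%:R = - lam + m%:R by rewrite natrD; ring.
by rewrite !shift add0r; ring.
Qed.
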